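(* Let $A$ be an $F_n$-good $n\times n$ matrix and suppose $A_{i,j}=1$. If $i'\in\{i-1,i+1\}$ with $1\leq i'\leq n$ and $A_{i',k}=1$ for some column $k$, then $k\in\{j-1,j+1\}$.
   Context: $F_n$ is the set of vectors $\vec{x}=(x_1,\ldots,x_n)\in\mathbb{Z}_2^n$ with no $i$ such that $x_i=x_{i+1}=1$. An $n\times n$ matrix $A$ over $\mathbb{Z}_2$ is $F_n$-good if it is invertible and $A\vec{x}\in F_n$ for all $\vec{x}\in F_n$. $A_{i,j}$ denotes the entry of $A$ in row $i$, column $j$. *)

From mathcomp Require Import all_boot all_algebra.
Set Implicit Arguments. Unset Strict Implicit. Unset Printing Implicit Defensive.
Local Open Scope ring_scope.

(* Indices are 0-based ordinals 'I_n (paper uses 1..n). Z_2 is 'F_2. *)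

Definition inFn (n : nat) (x : 'cV['F_2]_n) : Prop :=
  forall i j : 'I_n, val j = (val i).+1 -> ~ (x i 0 = 1 /\ x j 0 = 1).

Definition Fn_good (n : nat) (A : 'M['F_2]_n) : Prop :=
  A \in unitmx /\ forall x : 'cV['F_2]_n, inFn x -> inFn (A *m x).

(* The columns of A are the images A e_j of the unit vectors, which lie in F_n,
   so they lie in F_n too: two adjacent rows never both have a 1 in the same
   column. Hence
   A_{i',j} = 0 and A_{i,k} = 0. If k were not adjacent to j, then e_j + e_k
   would lie in F_n, but its image has the adjacent 1-entries A_{i,j} + A_{i,k}
   and A_{i',j} + A_{i',k}. *)
From mathcomp Require Import all_boot all_algebra.
From mathcomp Require Import zify.
Set Implicit Arguments. Unset Strict Implicit. Unset Printing Implicit Defensive.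
Import GRing.Theory.
Local Open Scope ring_scope.

Definition adjacent n (a b : 'I_n) : bool :=
  (val b == (val a).+1) || (val a == (val b).+1).

Lemma adjacentC n (a b : 'I_n) : adjacent a b = adjacent b a.
Proof. by rewrite /adjacent orbC. Qed.

Lemma F2_eq0_or1 (x : 'F_2) : x = 0 \/ x = 1.
Proof. by case: x => [[|[|m]] Hm]; [left; exact: val_inj|right; exact: val_inj|]. Qed.

Lemma inFn_adjacent n (x : 'cV['F_2]_n) (a b : 'I_n) :
  inFn x -> adjacent a b -> x a 0 = 1 -> x b 0 = 0.
Proof.
move=> Fx /orP[]/eqP ab xa1; case: (F2_eq0_or1 (x b 0)) => // xb1.
- by case: (Fx a b ab).
- by case: (Fx b a ab).
Qed.

Lemma inFn_delta n (j : 'I_n) : inFn (delta_mx j 0 : 'cV['F_2]_n).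
Proof.
move=> a b ab; rewrite !mxE !eqxx !andbT.
by case: (a =P j) => [aj|_]; case: (b =P j) => [bj|_] [] //; move: ab; rewrite aj bj; lia.
Qed.

(* In characteristic 2 this needs no [j != k]: for [j = k] the vector is 0. *)
Lemma inFn_delta_add n (j k : 'I_n) :
  ~~ adjacent j k -> inFn (delta_mx j 0 + delta_mx k 0 : 'cV['F_2]_n).
Proof.
move=> jk a b ab; rewrite !mxE !eqxx !andbT.
have mem c : ((c == j)%:R + (c == k)%:R : 'F_2) = 1 -> (c == j) || (c == k).
  by case: (c == j); case: (c == k).
move=> [/mem/orP xa /mem/orP xb]; move: jk; rewrite /adjacent.
by case: xa => /eqP aE; case: xb => /eqP bE; subst; lia.
Qed.

Lemma mulmx_delta_entry (R : pzRingType) m n (A : 'M[R]_(m, n)) j r :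
  (A *m (delta_mx j 0 : 'cV_n)) r 0 = A r j.
Proof. by rewrite -colE mxE. Qed.

Lemma Fn_good_col_adjacent n (A : 'M['F_2]_n) (a b j : 'I_n) :
  Fn_good A -> adjacent a b -> A a j = 1 -> A b j = 0.
Proof.
move=> [_ good] ab Aaj; rewrite -(mulmx_delta_entry A j b).
by apply: inFn_adjacent (good _ (inFn_delta (j := j))) ab _; rewrite mulmx_delta_entry.
Qed.

Theorem lemma1 (n : nat) (A : 'M['F_2]_n) (i j i' k : 'I_n) :
  Fn_good A -> A i j = 1 ->
  (val i' = (val i).-1 /\ 0 < val i)%N \/ val i' = (val i).+1 ->
  A i' k = 1 ->
  val k = (val j).-1 /\ (0 < val j)%N \/ val k = (val j).+1.
Proof.
move=> goodA Aij ii' Ai'k.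
have adj_ii' : adjacent i i' by rewrite /adjacent; lia.
have Ai'j : A i' j = 0 by exact: Fn_good_col_adjacent goodA adj_ii' Aij.
have Aik : A i k = 0 by apply: Fn_good_col_adjacent goodA _ Ai'k; rewrite adjacentC.
suff: adjacent j k by rewrite /adjacent; lia.
apply/negPn/negP => not_jk.
pose x : 'cV['F_2]_n := delta_mx j 0 + delta_mx k 0.
have Fx : inFn (A *m x) := goodA.2 _ (inFn_delta_add not_jk).
have Axi : (A *m x) i 0 = 1.
  by rewrite mulmxDr [LHS]mxE !mulmx_delta_entry Aij Aik addr0.
have Axi' : (A *m x) i' 0 = 1.
  by rewrite mulmxDr [LHS]mxE !mulmx_delta_entry Ai'j Ai'k add0r.
by move: Axi'; rewrite (inFn_adjacent Fx adj_ii' Axi).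
Qed.
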